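(* Let $k$ be an arbitrary field of characteristic $0$. Let $x$, $y$ and $z$ be roots of unity in $k$, let $a$, $b$ and $c$ be integer numbers and consider the matrix $$M(a,b,c;x,y,z) = \begin{pmatrix} x^a & x^b & x^c \\ y^a & y^b & y^c \\ z^a & z^b & z^c \end{pmatrix}.$$ If this matrix is degenerate, then it has either two proportional rows or two proportional columns. *)

From HB Require Import structures.
From mathcomp Require Import all_boot all_order all_algebra.
Set Implicit Arguments. Unset Strict Implicit. Unset Printing Implicit Defensive.
Import Order.TTheory GRing.Theory Num.Theory.
Local Open Scope ring_scope.

Definition is_root_of_unity (k : fieldType) (x : k) : Prop :=
  exists n : nat, (0 < n)%N /\ x ^+ n = 1.

Definition Mabc (k : fieldType) (a b c : int) (x y z : k) : 'M[k]_3 :=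
  \matrix_(i < 3, j < 3)
    ([:: x; y; z]`_i) ^ ([:: a; b; c]`_j).

Definition rows_proportional (k : fieldType) (A : 'M[k]_3) (i j : 'I_3) : Prop :=
  (exists l : k, row i A = l *: row j A) \/ (exists l : k, row j A = l *: row i A).

Definition cols_proportional (k : fieldType) (A : 'M[k]_3) (i j : 'I_3) : Prop :=
  (exists l : k, col i A = l *: col j A) \/ (exists l : k, col j A = l *: col i A).

Definition has_two_proportional_rows (k : fieldType) (A : 'M[k]_3) : Prop :=
  exists i j : 'I_3, i != j /\ rows_proportional A i j.

Definition has_two_proportional_cols (k : fieldType) (A : 'M[k]_3) : Prop :=
  exists i j : 'I_3, i != j /\ cols_proportional A i j.

From HB Require Import structures.
From mathcomp Require Import all_boot all_order all_algebra.
From mathcomp Require Import cyclic algC cyclotomic.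
From mathcomp Require Import ring.

Set Implicit Arguments.
Unset Strict Implicit.
Unset Printing Implicit Defensive.

Import Order.TTheory GRing.Theory Num.Theory.
Local Open Scope ring_scope.

(* Write u = y / x, w = z / x, p = b - a and q = c - a.  Up to a nonzero
   factor the determinant is (u^p - 1)(w^q - 1) - (u^q - 1)(w^p - 1), so with
   A = u^p, B = u^q, C = w^p, D = w^q the hypothesis reads
   (A - 1)(D - 1) = (B - 1)(C - 1).  The roots of unity A, B, C, D are powers
   of one primitive N-th root of unity g, so this is an integer polynomial
   identity satisfied by g.  As the field has characteristic 0 and the
   cyclotomic polynomial Phi_N is irreducible over Q, the identity also holds
   for the conjugate root g^-1, i.e. for A^-1, B^-1, C^-1, D^-1.  Unless A or D
   is 1, comparing the two relations gives AD = BC, hence A + D = B + C and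
   {A, D} = {B, C}.  Each of the resulting cases makes two rows or two columns
   of the matrix proportional. *)

(* Multiplication by t permutes S; compare the products of all elements. *)
Lemma uniq_mulr_closed_expr_size (R : idomainType) (S : seq R) :
  uniq S -> 0 \notin S -> {in S &, forall s t, s * t \in S} ->
  {in S, forall t, t ^+ size S = 1}.
Proof.
move=> uniqS S'0 mulS t tS.
have nzS s : s \in S -> s != 0 by apply: contraTneq => ->.
have uniq_tS : uniq (map ( *%R t) S) by rewrite map_inj_uniq //; apply/mulfI/nzS.
have tS_sub : {subset map ( *%R t) S <= S} by move=> _ /mapP[s sS ->]; apply: mulS.
have [|_ eq_tS] := uniq_min_size uniq_tS tS_sub; first by rewrite size_map.
have permS : perm_eq (map ( *%R t) S) S by apply: uniq_perm.
have prodS0 : \prod_(s <- S) s != 0 by rewrite prodf_seq_neq0; apply/allP.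
apply: (mulIf prodS0); rewrite mul1r -{2}(perm_big _ permS) big_map big_split /=.
by rewrite big_const_seq count_predT iter_mulr_1.
Qed.

Lemma prim_root_inv (F : fieldType) (N : nat) (g : F) :
  N.-primitive_root g -> N.-primitive_root g^-1.
Proof.
move=> prim_g; have N_gt0 := prim_order_gt0 prim_g.
have g0 : g != 0 by rewrite (prim_root_eq0 prim_g) -lt0n.
have -> : g^-1 = g ^+ N.-1.
  by apply: (mulfI g0); rewrite divff // -exprS prednK // prim_expr_order.
by rewrite (prim_root_exp_coprime _ prim_g); case: (N) N_gt0 => // n _; apply: coprimenS.
Qed.

Section RootsOfUnity.
Variable F : fieldType.
Implicit Types (t u w : F) (rs : seq F).

Lemma root_of_unity_neq0 t : is_root_of_unity t -> t != 0.
Proof.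
case=> n [n_gt0 tn1]; apply: contraNneq (oner_neq0 F) => t0.
by rewrite -tn1 t0 expr0n gtn_eqF.
Qed.

Lemma root_of_unity_div u w :
  is_root_of_unity u -> is_root_of_unity w -> is_root_of_unity (u / w).
Proof.
case=> m [m_gt0 um1] [n [n_gt0 wn1]]; exists (m * n)%N.
by rewrite muln_gt0 m_gt0 exprMn exprVn exprM um1 mulnC exprM wn1 !expr1n invr1 mulr1.
Qed.

Lemma root_of_unity_exprz t (e : int) : is_root_of_unity t -> is_root_of_unity (t ^ e).
Proof.
case=> n [n_gt0 tn1]; exists n; split => //.
by rewrite -[_ ^+ n]/((t ^ e) ^ n%:Z) exprzAC -[t ^ n%:Z]/(t ^+ n) tn1 exp1rz.
Qed.

Lemma roots_of_unity_pair_prim_root u w :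
  is_root_of_unity u -> is_root_of_unity w ->
  exists N (g : F), [/\ N.-primitive_root g, u ^+ N = 1 & w ^+ N = 1].
Proof.
move=> ru rw; have [[m [m_gt0 um1]] [n [n_gt0 wn1]]] := (ru, rw).
pose S := undup [seq u ^+ i * w ^+ j | i <- iota 0 m, j <- iota 0 n].
have memS s : reflect (exists i j, s = u ^+ i * w ^+ j) (s \in S).
  rewrite mem_undup; apply: (iffP allpairsP) => [[[i j] [_ _ ->]]|[i [j ->]]].
    by exists i, j.
  exists (i %% m, j %% n)%N; rewrite !mem_iota !ltn_pmod //.
  by rewrite !expr_mod.
have S1 : 1 \in S by apply/memS; exists 0%N, 0%N; rewrite mulr1.
have S'0 : 0 \notin S.
  apply/memS => -[i [j /esym/eqP]]; rewrite mulf_eq0 !expf_eq0.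
  by rewrite (negPf (root_of_unity_neq0 ru)) (negPf (root_of_unity_neq0 rw)) !andbF.
have mulS : {in S &, forall s t, s * t \in S}.
  move=> _ _ /memS[i [j ->]] /memS[i' [j' ->]]; apply/memS.
  by exists (i + i')%N, (j + j')%N; rewrite !exprD mulrACA.
have unityS := uniq_mulr_closed_expr_size (undup_uniq _) S'0 mulS.
have S_gt0 : (0 < size S)%N by case: (S) S1.
have /hasP[g _ prim_g] : has (size S).-primitive_root S.
  apply: has_prim_root => //; last exact: undup_uniq.
  by apply/allP => s sS; rewrite unity_rootE unityS.
exists (size S), g; split; first exact: prim_g.
  by apply: unityS; apply/memS; exists 1%N, 0%N; rewrite mulr1.
by apply: unityS; apply/memS; exists 0%N, 1%N; rewrite mul1r.
Qed.

Lemma roots_of_unity_prim_root rs : {in rs, forall t, is_root_of_unity t} ->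
  exists N (g : F), N.-primitive_root g /\ {in rs, forall t, t ^+ N = 1}.
Proof.
elim: rs => [_|t rs IHrs rs_t].
  exists 1%N, 1; split => //; apply/andP; split => //.
  by apply/forallP => -[[|//] ?]; rewrite /= unity_rootE expr1 !eqxx.
have [|N [g [prim_g rsN]]] := IHrs.
  by move=> s rs_s; apply: rs_t; rewrite inE rs_s orbT.
have rg : is_root_of_unity g.
  by exists N; rewrite (prim_order_gt0 prim_g) (prim_expr_order prim_g).
have [M [h [prim_h gM tM]]] := roots_of_unity_pair_prim_root rg (rs_t t (mem_head _ _)).
exists M, h; split => // s; rewrite inE => /predU1P[-> //|/rsN].
by case/(prim_rootP prim_g) => i ->; rewrite exprAC gM expr1n.
Qed.

End RootsOfUnity.

Lemma root_Cyclotomic_unity (R : idomainType) (d : nat) (t : R) :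
  (0 < d)%N -> root (map_poly intr 'Phi_d) t -> t ^+ d = 1.
Proof.
move=> d_gt0 Phi_t; apply/eqP; rewrite -subr_eq0.
have := congr1 (fun p => (map_poly (intr : int -> R) p).[t]) (prod_Cyclotomic d_gt0).
rewrite (big_rem d) -?dvdn_divisors //= rmorphM hornerM (eqP Phi_t) mul0r.
by rewrite rmorphB rmorph1 /= map_polyXn !hornerE => <-.
Qed.

Lemma root_Cyclotomic (R : idomainType) (N : nat) (xi : R) :
  N.-primitive_root xi -> root (map_poly intr 'Phi_N) xi.
Proof.
move=> prim_xi; have N_gt0 := prim_order_gt0 prim_xi.
have : root (map_poly (intr : int -> R) ('X^N - 1)) xi.
  by rewrite rmorphB rmorph1 /= map_polyXn rootE !hornerE prim_expr_order ?subrr.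
rewrite -(prod_Cyclotomic N_gt0) rmorph_prod /=.
rewrite rootE horner_prod prodf_seq_eq0 => /hasP[d].
rewrite -dvdn_divisors // => dvd_dN Phi_d; have d_gt0 := dvdn_gt0 N_gt0 dvd_dN.
suff -> : N = d by [].
apply/eqP; rewrite eqn_dvd dvd_dN (prim_order_dvd prim_xi).
by rewrite (root_Cyclotomic_unity d_gt0 Phi_d) eqxx.
Qed.

(* The library's map_resultant only covers morphisms out of a polynomial ring. *)
Lemma rmorph_resultant (aR rR : nzRingType) (f : {rmorphism aR -> rR})
    (p q : {poly aR}) :
  f (lead_coef p) != 0 -> f (lead_coef q) != 0 ->
  f (resultant p q) = resultant (map_poly f p) (map_poly f q).
Proof.
move=> nz_fp nz_fq; rewrite /resultant /Sylvester_mx !size_map_poly_id0 //.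
rewrite -det_map_mx /= map_col_mx; congr (\det (col_mx _ _));
  by apply: map_lin1_mx => v; rewrite map_poly_rV rmorphM /= map_rVpoly.
Qed.

Lemma resultant_eq0_common_root_algC (p q : {poly int}) :
  p != 0 -> q != 0 -> resultant p q = 0 ->
  exists z : algC, root (map_poly intr p) z && root (map_poly intr q) z.
Proof.
move=> p0 q0 res0.
have : (1 < size (gcdp (map_poly (intr : int -> algC) p) (map_poly intr q)))%N.
  by rewrite -resultant_eq0 -rmorph_resultant ?res0 ?rmorph0 ?intr_eq0 ?lead_coef_eq0.
by move/gtn_eqF/negbT/closed_rootP => [z]; rewrite root_gcd; exists z.
Qed.

Lemma size_Cyclotomic_leq_root (N : nat) (z : algC) (r : {poly int}) :
  N.-primitive_root z -> r != 0 -> root (map_poly intr r) z ->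
  (size 'Phi_N <= size r)%N.
Proof.
move=> prim_z r0 rz.
have [p [minp _] dvd_minp] := minCpolyP z.
have : p %| map_poly intr r.
  rewrite -dvd_minp -map_poly_comp (eq_map_poly (g := intr)) // => c /=.
  exact: ratr_int.
have rQ0 : map_poly (intr : int -> rat) r != 0.
  by rewrite map_poly_eq0_id0 // intr_eq0 lead_coef_eq0.
move/(dvdp_leq rQ0); rewrite size_map_inj_poly //; last exact: intr_inj.
rewrite -(size_map_poly (ratr : rat -> algC)) -minp (minCpoly_cyclotomic prim_z).
by rewrite -(Cintr_Cyclotomic prim_z) size_map_inj_poly //; apply: intr_inj.
Qed.

Lemma sum_mul_eq_cases (R : idomainType) (A B C D : R) :
  A + D = B + C -> A * D = B * C -> (A = B /\ C = D) \/ (A = C /\ B = D).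
Proof.
move=> sumE mulE.
have : (A - B) * (A - C) = A * (A + D - (B + C)) + (B * C - A * D) by ring.
rewrite sumE mulE !subrr mulr0 addr0 => /eqP.
rewrite mulf_eq0 !subr_eq0 => /orP[]/eqP AE; [left|right]; split => //.
  by apply: (addrI A); rewrite sumE AE.
by apply: (addrI A); rewrite sumE AE addrC.
Qed.

Lemma relation_with_inverse_cases (F : fieldType) (A B C D : F) :
  A != 0 -> B != 0 -> C != 0 -> D != 0 ->
  (A - 1) * (D - 1) = (B - 1) * (C - 1) ->
  (A^-1 - 1) * (D^-1 - 1) = (B^-1 - 1) * (C^-1 - 1) ->
  [\/ A = 1 /\ B = 1, C = 1 /\ D = 1 | A = C /\ B = D] \/
  [\/ A = 1 /\ C = 1, B = 1 /\ D = 1 | A = B /\ C = D].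
Proof.
move=> A0 B0 C0 D0 rel rel_inv.
have B1_or_C1 : (A - 1) * (D - 1) = 0 -> B = 1 \/ C = 1.
  by rewrite rel => /eqP; rewrite mulf_eq0 !subr_eq0 => /orP[]/eqP; [left|right].
have [A1|A1] := eqVneq A 1.
  case: B1_or_C1 => [|B1|C1]; first by rewrite A1 subrr mul0r.
    by left; constructor 1.
  by right; constructor 1.
have [D1|D1] := eqVneq D 1.
  case: B1_or_C1 => [|B1|C1]; first by rewrite D1 subrr mulr0.
    by right; constructor 2.
  by left; constructor 2.
have invE (X Y : F) : X != 0 -> Y != 0 ->
    (X^-1 - 1) * (Y^-1 - 1) = (X - 1) * (Y - 1) / (X * Y).
  by move=> X0 Y0; field; rewrite X0 Y0.
have ADE : A * D = B * C.
  have AD1 : (A - 1) * (D - 1) != 0 by rewrite mulf_neq0 ?subr_eq0.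
  by move: rel_inv; rewrite !invE // -rel => /(mulfI AD1)/invr_inj.
have sumE : A + D = B + C.
  have : A + D - (B + C) = A * D - B * C - ((A - 1) * (D - 1) - (B - 1) * (C - 1)).
    by ring.
  by rewrite ADE rel !subrr => /eqP; rewrite subr_eq0 => /eqP.
by case: (sum_mul_eq_cases sumE ADE) => ABCD; [right|left]; constructor 3.
Qed.

Section CharZero.
Variables (F : fieldType) (charF0 : [pchar F] =i pred0).

Lemma pchar0_intr_eq0 (c : int) : (c%:~R == 0 :> F) = (c == 0).
Proof.
have natF0 := (pcharf0P F).1 charF0.
by case: c => n; rewrite ?NegzE ?mulrNz ?oppr_eq0 -?pmulrn natF0.
Qed.

Lemma int_poly_prim_root_eq0 (N : nat) (xi : F) (r : {poly int}) :
  N.-primitive_root xi -> (size r < size 'Phi_N)%N ->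
  root (map_poly intr r) xi -> r = 0.
Proof.
move=> prim_xi lt_r_Phi r_xi; apply/eqP/contraT => r0.
have N_gt0 := prim_order_gt0 prim_xi.
have Phi_gt1 : (1 < size 'Phi_N)%N by rewrite size_Cyclotomic ltnS totient_gt0.
have [r_gt1 | r_le1] := ltnP 1 (size r); last first.
  move: r_xi r0; rewrite [r]size1_polyC // map_polyC rootC pchar0_intr_eq0.
  by rewrite polyC_eq0 => ->.
(* The integer resultant of r and Phi_N vanishes in F, hence in Z, so r shares
   a complex root with Phi_N, whose minimal polynomial is Phi_N itself. *)
have [[u v] _ /= res_uv] := resultant_in_ideal r_gt1 Phi_gt1.
have res0 : resultant r 'Phi_N = 0.
  apply/eqP; rewrite -pchar0_intr_eq0.
  have := congr1 (fun p => (map_poly (intr : int -> F) p).[xi]) res_uv.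
  rewrite /= map_polyC hornerC rmorphD !rmorphM /= hornerD !hornerM (eqP r_xi).
  by rewrite (eqP (root_Cyclotomic prim_xi)) !mulr0 addr0 => ->.
have Phi0 : 'Phi_N != 0 by apply: monic_neq0; apply: Cyclotomic_monic.
have [z /andP[r_z Phi_z]] := resultant_eq0_common_root_algC r0 Phi0 res0.
have [z0 prim_z0] := C_prim_root_exists N_gt0.
have prim_z : N.-primitive_root z.
  by rewrite -(root_cyclotomic prim_z0) -(Cintr_Cyclotomic prim_z0).
by move: (size_Cyclotomic_leq_root prim_z r0 r_z); rewrite leqNgt lt_r_Phi.
Qed.

Lemma root_int_poly_prim_root (N : nat) (xi xi' : F) (P : {poly int}) :
  N.-primitive_root xi -> N.-primitive_root xi' ->
  root (map_poly intr P) xi -> root (map_poly intr P) xi'.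
Proof.
move=> prim_xi prim_xi' P_xi.
have Phi_monic := Cyclotomic_monic N.
have divP := Pdiv.RingMonic.rdivp_eq Phi_monic P.
have mod0 : Pdiv.Ring.rmodp P 'Phi_N = 0.
  apply: (int_poly_prim_root_eq0 prim_xi).
    by rewrite Pdiv.Ring.ltn_rmodpN0 // monic_neq0.
  move: P_xi; rewrite {1}divP rmorphD rmorphM /= !rootE hornerD hornerM.
  by rewrite (eqP (root_Cyclotomic prim_xi)) mulr0 add0r.
by rewrite divP mod0 addr0 rmorphM /= rootM root_Cyclotomic ?orbT.
Qed.

Lemma roots_of_unity_inv_relation (A B C D : F) :
  is_root_of_unity A -> is_root_of_unity B ->
  is_root_of_unity C -> is_root_of_unity D ->
  (A - 1) * (D - 1) = (B - 1) * (C - 1) ->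
  (A^-1 - 1) * (D^-1 - 1) = (B^-1 - 1) * (C^-1 - 1).
Proof.
move=> rA rB rC rD.
have [|N [g [prim_g unityN]]] := @roots_of_unity_prim_root F [:: A; B; C; D].
  by move=> t; rewrite !inE => /or4P[] /eqP ->.
have pow t : t \in [:: A; B; C; D] -> exists i, t = g ^+ i.
  by move/unityN/(prim_rootP prim_g) => [i ->]; exists i.
have [al ->] : exists al, A = g ^+ al by apply: pow; rewrite !inE eqxx.
have [be ->] : exists be, B = g ^+ be by apply: pow; rewrite !inE eqxx !orbT.
have [ga ->] : exists ga, C = g ^+ ga by apply: pow; rewrite !inE eqxx !orbT.
have [de ->] : exists de, D = g ^+ de by apply: pow; rewrite !inE eqxx !orbT.
pose P : {poly int} := ('X^al - 1) * ('X^de - 1) - ('X^be - 1) * ('X^ga - 1).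
have rootP (t : F) : root (map_poly (intr : int -> F) P) t =
    ((t ^+ al - 1) * (t ^+ de - 1) == (t ^+ be - 1) * (t ^+ ga - 1)).
  by rewrite rootE /P !(rmorphB, rmorphM, rmorph1) /= !map_polyXn !hornerE subr_eq0.
move/eqP; rewrite -rootP => /(root_int_poly_prim_root prim_g (prim_root_inv prim_g)).
by rewrite rootP !exprVn => /eqP.
Qed.

Lemma roots_of_unity_relation_cases (A B C D : F) :
  is_root_of_unity A -> is_root_of_unity B ->
  is_root_of_unity C -> is_root_of_unity D ->
  (A - 1) * (D - 1) = (B - 1) * (C - 1) ->
  [\/ A = 1 /\ B = 1, C = 1 /\ D = 1 | A = C /\ B = D] \/
  [\/ A = 1 /\ C = 1, B = 1 /\ D = 1 | A = B /\ C = D].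
Proof.
move=> rA rB rC rD rel.
apply: relation_with_inverse_cases; rewrite ?root_of_unity_neq0 //.
exact: roots_of_unity_inv_relation.
Qed.

End CharZero.

Lemma det_mx33 (R : comNzRingType) (A : 'M[R]_3) :
  \det A = A 0 0 * (A 1 1 * A 2 2 - A 1 2 * A 2 1)
         - A 0 1 * (A 1 0 * A 2 2 - A 1 2 * A 2 0)
         + A 0 2 * (A 1 0 * A 2 1 - A 1 1 * A 2 0).
Proof.
pose B i j := A (inord i) (inord j).
have AB (i j : 'I_3) : A i j = B i j by rewrite /B !inord_val.
rewrite (expand_det_row _ 0) !big_ord_recl big_ord0 addr0 /cofactor.
rewrite !(expand_det_row _ 0) !big_ord_recl !big_ord0 !addr0 /cofactor.
by rewrite !det_mx11 !mxE !AB /= /bump /= !expr0 !expr1 !mul1r; ring.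
Qed.

Section Mabc.
Variables (k : fieldType) (a b c : int) (x y z : k).
Hypotheses (x0 : x != 0) (y0 : y != 0) (z0 : z != 0).
Local Notation v := [:: x; y; z].
Local Notation e := [:: a; b; c].
Local Notation M := (Mabc a b c x y z).

Lemma Mabc_entry (i m : 'I_3) :
  M i m = x ^ e`_m * ((v`_i / x) ^ a * (v`_i / x) ^ (e`_m - a)).
Proof.
have vi0 : v`_i / x != 0 by rewrite mulf_neq0 ?invr_eq0 //; case: i => [[|[|[|]]]].
by rewrite mxE -expfzDr // addrC subrK -expfzMl mulrC divfK.
Qed.

Lemma det_Mabc_eq0 :
  (\det M == 0) =
  (((y / x) ^ (b - a) - 1) * ((z / x) ^ (c - a) - 1) ==
   ((y / x) ^ (c - a) - 1) * ((z / x) ^ (b - a) - 1)).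
Proof.
rewrite det_mx33 !Mabc_entry /= divff // !exp1rz subrr !expr0z.
set u := y / x; set w := z / x; set K := x ^ a * x ^ b * x ^ c * u ^ a * w ^ a.
have K0 : K != 0 by rewrite !mulf_neq0 ?expfz_neq0 ?mulf_neq0 ?invr_eq0.
transitivity (K * ((u ^ (b - a) - 1) * (w ^ (c - a) - 1)
                  - (u ^ (c - a) - 1) * (w ^ (b - a) - 1)) == 0).
  by congr (_ == 0); rewrite /K; ring.
by rewrite mulf_eq0 (negPf K0) subr_eq0.
Qed.

Lemma Mabc_rows_proportional (i j : 'I_3) :
  (v`_i / x) ^ (b - a) = (v`_j / x) ^ (b - a) ->
  (v`_i / x) ^ (c - a) = (v`_j / x) ^ (c - a) ->
  rows_proportional M i j.
Proof.
move=> eq_b eq_c; left; exists ((v`_i / x) ^ a / (v`_j / x) ^ a).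
have vj0 : (v`_j / x) ^ a != 0.
  by rewrite expfz_neq0 // mulf_neq0 ?invr_eq0 //; case: j {eq_b eq_c} => [[|[|[|]]]].
apply/rowP => m; rewrite [LHS]mxE [RHS]mxE [in RHS]mxE !Mabc_entry.
have -> : (v`_i / x) ^ (e`_m - a) = (v`_j / x) ^ (e`_m - a).
  by case: m => [[|[|[|]]]] //= _; rewrite subrr !expr0z.
by field.
Qed.

Lemma Mabc_cols_proportional (i j : 'I_3) :
  (y / x) ^ (e`_i - a) = (y / x) ^ (e`_j - a) ->
  (z / x) ^ (e`_i - a) = (z / x) ^ (e`_j - a) ->
  cols_proportional M i j.
Proof.
move=> eq_y eq_z; left; exists (x ^ e`_i / x ^ e`_j).
have xj0 : x ^ e`_j != 0 by rewrite expfz_neq0.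
apply/colP => m; rewrite [LHS]mxE [RHS]mxE [in RHS]mxE !Mabc_entry.
have -> : (v`_m / x) ^ (e`_i - a) = (v`_m / x) ^ (e`_j - a).
  by case: m => [[|[|[|]]]] //= _; rewrite divff // !exp1rz.
by field.
Qed.

End Mabc.

Theorem lemma5p17 (k : fieldType) (hchar : [pchar k] =i pred0)
  (x y z : k) (hx : is_root_of_unity x) (hy : is_root_of_unity y)
  (hz : is_root_of_unity z) (a b c : int) :
  \det (Mabc a b c x y z) = 0 ->
  has_two_proportional_rows (Mabc a b c x y z) \/
  has_two_proportional_cols (Mabc a b c x y z).
Proof.
have [x0 y0 z0] : [/\ x != 0, y != 0 & z != 0] by split; apply: root_of_unity_neq0.
move/eqP; rewrite det_Mabc_eq0 // => /eqP rel.
have ru e : is_root_of_unity ((y / x) ^ e) by apply/root_of_unity_exprz/root_of_unity_div.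
have rw e : is_root_of_unity ((z / x) ^ e) by apply/root_of_unity_exprz/root_of_unity_div.
case: (roots_of_unity_relation_cases hchar (ru _) (ru _) (rw _) (rw _) rel)
  => -[] [eq1 eq2].
- left; exists 1, 0; split=> //.
  by apply: Mabc_rows_proportional; rewrite //= divff // exp1rz.
- left; exists 2, 0; split=> //.
  by apply: Mabc_rows_proportional; rewrite //= divff // exp1rz.
- by left; exists 1, 2; split=> //; apply: Mabc_rows_proportional.
- right; exists 1, 0; split=> //.
  by apply: Mabc_cols_proportional; rewrite //= subrr expr0z.
- right; exists 2, 0; split=> //.
  by apply: Mabc_cols_proportional; rewrite //= subrr expr0z.
- by right; exists 1, 2; split=> //; apply: Mabc_cols_proportional.
Qed.
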